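(* Let $H$ be a Hilbert space and $U_{ik}\in B(H)$, $i,k=1,\dots,n$, operators satisfying relations (R1)–(R5). Then $U_{ik}U_{il}=0$ for all $i,k,l$ with $k\neq l$.
   Context: $n\ge2$, $\theta\in M_n(\mathbb R)$ skew-symmetric, $\omega_{ij}=e^{2\pi i\theta_{ij}}$. Relations, for all $i,j,k,l\in\{1,\dots,n\}$: (R1) $U_{ik}U_{jl}+\omega_{ji}U_{jk}U_{il}=\omega_{kl}U_{il}U_{jk}+\omega_{ji}\omega_{kl}U_{jl}U_{ik}$; (R2) $\sum_iU_{ik}U_{il}^*=\delta_{kl}1$; (R3) $\sum_iU_{il}^*U_{ik}=\delta_{kl}1$; (R4) $U_{jk}U_{ik}^*=0$ for $i\neq j$; (R5) $U_{ik}^*U_{jk}=0$ for $i\neq j$. *)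

From HB Require Import structures.
From mathcomp Require Import all_boot all_order all_algebra.
From mathcomp Require Import all_classical all_reals all_analysis.
From mathcomp Require Import complex.
Set Implicit Arguments. Unset Strict Implicit. Unset Printing Implicit Defensive.
Import Order.TTheory GRing.Theory Num.Theory.
Local Open Scope ring_scope.

Definition ipnorm (R : realType) (V : lmodType R[i]) (ip : V -> V -> R[i])
  (x : V) : R := Num.sqrt (complex.Re (ip x x)).

Definition is_inner_product (R : realType) (V : lmodType R[i])
  (ip : V -> V -> R[i]) : Prop :=
  [/\ (forall (a : R[i]) (x y z : V), ip (a *: x + y) z = a * ip x z + ip y z),
      (forall x y : V, ip y x = conjc (ip x y)),
      (forall x : V, 0 <= ip x x) &
      (forall x : V, ip x x = 0 -> x = 0)].

Definition ip_complete (R : realType) (V : lmodType R[i])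
  (ip : V -> V -> R[i]) : Prop :=
  forall u : nat -> V,
    (forall e : R, 0 < e -> exists N : nat, forall m p : nat,
        (N <= m)%N -> (N <= p)%N -> ipnorm ip (u m - u p) < e) ->
    exists l : V, forall e : R, 0 < e -> exists N : nat, forall m : nat,
        (N <= m)%N -> ipnorm ip (u m - l) < e.

Definition is_hilbert (R : realType) (V : lmodType R[i])
  (ip : V -> V -> R[i]) : Prop :=
  is_inner_product ip /\ ip_complete ip.

Definition bounded_op (R : realType) (V : lmodType R[i])
  (ip : V -> V -> R[i]) (T : V -> V) : Prop :=
  (forall (a : R[i]) (x y : V), T (a *: x + y) = a *: T x + T y) /\
  exists M : R, forall x : V, ipnorm ip (T x) <= M * ipnorm ip x.

Definition is_adjoint (R : realType) (V : lmodType R[i])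
  (ip : V -> V -> R[i]) (T Ts : V -> V) : Prop :=
  forall x y : V, ip (T x) y = ip x (Ts y).

(* omega_ij = e^{2 pi i theta_ij} = cos(2 pi theta_ij) + i sin(2 pi theta_ij). *)
Definition omega (R : realType) (n : nat) (theta : 'M[R]_n) (i j : 'I_n) : R[i] :=
  Complex (cos (2 * pi * theta i j)) (sin (2 * pi * theta i j)).

From HB Require Import structures.
From mathcomp Require Import all_boot all_order all_algebra.
From mathcomp Require Import all_classical all_reals all_analysis.
From mathcomp Require Import complex.
From mathcomp Require Import lra.
Set Implicit Arguments. Unset Strict Implicit. Unset Printing Implicit Defensive.
Import Order.TTheory GRing.Theory Num.Theory.
Local Open Scope ring_scope.

(* Taking i = j in (R1) shows that U_ik and U_il commute up to the scalar
   omega_kl, since omega_ii = 1.  Applying U_il to (R3) and using (R4) gives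
   U_il U_il^* U_ik = 0, hence U_il^* U_ik = 0: the ranges of U_ik and U_il
   are orthogonal when k <> l.  The vector U_ik U_il x lies in the range of
   U_ik and, being a multiple of U_il U_ik x, also in the range of U_il, so it
   is orthogonal to itself.  Only (R1), (R3) and (R4) are needed. *)

Section InnerProduct.

Variables (R : realType) (V : lmodType R[i]) (ip : V -> V -> R[i]).
Hypothesis ip_inner : is_inner_product ip.

Lemma ip0l (y : V) : ip 0 y = 0.
Proof.
case: ip_inner => ipDl _ _ _.
have := ipDl 1 0 0 y; rewrite scaler0 addr0 mul1r => ip0D.
by apply: (addrI (ip 0 y)); rewrite addr0 -ip0D.
Qed.

Lemma ip0r (x : V) : ip x 0 = 0.
Proof. by case: ip_inner => _ ipC _ _; rewrite ipC ip0l conjc0. Qed.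

Lemma ipZr (a : R[i]) (x y : V) : ip x (a *: y) = conjc a * ip x y.
Proof.
case: ip_inner => ipDl ipC _ _.
by rewrite ipC -[a *: y]addr0 ipDl ip0l addr0 rmorphM [ip x y]ipC.
Qed.

Lemma ip_orthogonal_multiple_eq0 (a : R[i]) (x y : V) :
  x = a *: y -> ip x y = 0 -> x = 0.
Proof.
case: ip_inner => _ _ _ ipx0 xay xy0.
by apply: ipx0; rewrite {2}xay ipZr xy0 mulr0.
Qed.

Section Adjoint.

Variables (T Ts : V -> V).
Hypothesis T_Ts : is_adjoint ip T Ts.

Lemma adjoint_ker_range_eq0 (y : V) : T (Ts y) = 0 -> Ts y = 0.
Proof.
case: ip_inner => _ _ _ ipx0 TTsy0.
by apply: ipx0; rewrite -T_Ts TTsy0 ip0l.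
Qed.

Lemma ip_range_orthogonal (S : V -> V) :
  (forall x, Ts (S x) = 0) -> forall x y, ip (S x) (T y) = 0.
Proof.
case: ip_inner => _ ipC _ _ TsS0 x y.
by rewrite ipC T_Ts TsS0 ip0r conjc0.
Qed.

End Adjoint.

End InnerProduct.

Section LinearOperator.

Variables (R : realType) (V : lmodType R[i]) (T : V -> V).
Hypothesis T_lin : forall (a : R[i]) (x y : V), T (a *: x + y) = a *: T x + T y.

Lemma linop_additive : {morph T : x y / x + y}.
Proof. by move=> x y; rewrite -[x in LHS]scale1r T_lin scale1r. Qed.

Lemma linop0 : T 0 = 0.
Proof. by apply: (addrI (T 0)); rewrite -linop_additive !addr0. Qed.

Lemma linop_sum (n : nat) (F : 'I_n -> V) :
  T (\sum_(i < n) F i) = \sum_(i < n) T (F i).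
Proof. exact: (big_morph T linop_additive linop0). Qed.

End LinearOperator.

Lemma omega_diag (R : realType) (n : nat) (theta : 'M[R]_n) :
  theta^T = - theta -> forall i, omega theta i i = 1.
Proof.
move=> theta_skew i.
have : theta i i = 0.
  by have := congr1 (fun M : 'M[R]_n => M i i) theta_skew; rewrite !mxE; lra.
by rewrite /omega => ->; rewrite mulr0 cos0 sin0.
Qed.

Section QuantumPermutationRelations.

Variables (R : realType) (V : lmodType R[i]) (ip : V -> V -> R[i]).
Hypothesis ip_inner : is_inner_product ip.
Variables (n : nat) (U Us : 'I_n -> 'I_n -> V -> V).
Hypothesis U_lin :
  forall i k (a : R[i]) (x y : V), U i k (a *: x + y) = a *: U i k x + U i k y.
Hypothesis U_Us : forall i k, is_adjoint ip (U i k) (Us i k).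

Lemma Us_U_row_eq0
    (R3 : forall (k l : 'I_n) (x : V),
        \sum_(i < n) Us i l (U i k x) = if k == l then x else 0)
    (R4 : forall (i j k : 'I_n) (x : V), i != j -> U j k (Us i k x) = 0)
    (i k l : 'I_n) (x : V) :
  k != l -> Us i l (U i k x) = 0.
Proof.
move=> kl; apply: (adjoint_ker_range_eq0 ip_inner (U_Us i l)).
have := congr1 (U i l) (R3 k l x).
rewrite (negbTE kl) linop0 // linop_sum // (bigD1 i) //= big1 ?addr0 //.
by move=> j ji; apply: R4.
Qed.

Lemma U_row_commute (theta : 'M[R]_n) (theta_skew : theta^T = - theta)
    (R1 : forall (i j k l : 'I_n) (x : V),
        U i k (U j l x) + omega theta j i *: U j k (U i l x)
        = omega theta k l *: U i l (U j k x)
          + (omega theta j i * omega theta k l) *: U j l (U i k x))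
    (i k l : 'I_n) (x : V) :
  U i k (U i l x) = omega theta k l *: U i l (U i k x).
Proof.
have two_neq0 : (2%:R : R[i]) != 0 by rewrite pnatr_eq0.
apply: (scalerI two_neq0); rewrite !scaler_nat !mulr2n.
by have := R1 i i k l x; rewrite omega_diag // mul1r scale1r.
Qed.

End QuantumPermutationRelations.

Theorem proposition3p13
  (R : realType) (V : lmodType R[i]) (ip : V -> V -> R[i])
  (HV : is_hilbert ip)
  (n : nat) (Hn : (2 <= n)%N)
  (theta : 'M[R]_n) (Htheta : theta^T = - theta)
  (U Us : 'I_n -> 'I_n -> V -> V)
  (HU : forall i k : 'I_n, bounded_op ip (U i k))
  (HUs : forall i k : 'I_n, is_adjoint ip (U i k) (Us i k))
  (R1 : forall (i j k l : 'I_n) (x : V),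
      U i k (U j l x) + omega theta j i *: U j k (U i l x)
      = omega theta k l *: U i l (U j k x)
        + (omega theta j i * omega theta k l) *: U j l (U i k x))
  (R2 : forall (k l : 'I_n) (x : V),
      \sum_(i < n) U i k (Us i l x) = if k == l then x else 0)
  (R3 : forall (k l : 'I_n) (x : V),
      \sum_(i < n) Us i l (U i k x) = if k == l then x else 0)
  (R4 : forall (i j k : 'I_n) (x : V), i != j -> U j k (Us i k x) = 0)
  (R5 : forall (i j k : 'I_n) (x : V), i != j -> Us i k (U j k x) = 0) :
  forall (i k l : 'I_n) (x : V), k != l -> U i k (U i l x) = 0.
Proof.
case: HV => ip_inner _.
have U_lin i k : forall a x y, U i k (a *: x + y) = a *: U i k x + U i k y.
  by case: (HU i k).
move=> i k l x kl.
apply: (ip_orthogonal_multiple_eq0 ip_inner).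
  exact: (U_row_commute Htheta R1).
apply: (ip_range_orthogonal ip_inner (HUs i l)) => y.
exact: (Us_U_row_eq0 ip_inner U_lin HUs R3 R4 i y kl).
Qed.
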